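(* Let $n,k$ be integers with $2<2k\le n$ such that $\mathrm{Pet}(n,k)$ is not bipartite (equivalently, it is not the case that $n$ is even and $k$ is odd). Write $d=\gcd(n,k)$ and define the index set $$\mathrm{Ind}(n,k)=\begin{cases}\{t \mid t \text{ odd},\ 0\le t\le \min\{\tfrac{2k}{d},\ \lfloor\tfrac{(k-1)^2}{n}\rfloor+1\}\} & \text{if } k \text{ and } n \text{ are odd},\\ \{t\in\mathbb{Z} \mid 0<t\le \min\{\tfrac{2k}{d},\ \lfloor\tfrac{(k-1)^2}{n}\rfloor\}\} & \text{if } \tfrac{n}{d} \text{ is odd and } k \text{ is even},\\ \{t\in\mathbb{Z} \mid 0<t\le \min\{\tfrac{k}{d},\ \lfloor\tfrac{(k-1)^2}{n}\rfloor\}\} & \text{if } \tfrac{n}{d} \text{ and } k \text{ are even},\end{cases}$$ and $$\mathcal{G}=\bigcup_{t\in \mathrm{Ind}(n,k)}\Big\{\,tn+(1-k)\lfloor \tfrac{tn}{k}\rfloor+2,\ \ (1+k)\lceil \tfrac{tn}{k}\rceil-tn+2\,\Big\}.$$ Then, with $\mathbb{O}$ the set of odd integers, $$g_{odd}(\mathrm{Pet}(n,k))=\min\Big(\big(\{\tfrac{n}{d},\ k+3\}\cup\mathcal{G}\big)\cap\mathbb{O}\Big).$$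
   Context: For integers $n,k$ with $2<2k\le n$, the generalized Petersen graph $\mathrm{Pet}(n,k)$ has vertex set $\{u_0,\dots,u_{n-1}\}\cup\{v_0,\dots,v_{n-1}\}$ and edge set $\{u_iu_{i+1}\}\cup\{u_iv_i\}\cup\{v_iv_{i+k}\}$, $i\in\{0,\dots,n-1\}$, with indices taken modulo $n$. For a non-bipartite graph $G$, the odd girth $g_{odd}(G)$ is the length of a shortest odd cycle of $G$. *)

From HB Require Import structures.
From mathcomp Require Import all_boot all_order all_algebra.
Set Implicit Arguments. Unset Strict Implicit. Unset Printing Implicit Defensive.
Import Order.TTheory GRing.Theory Num.Theory.

(* Vertices of Pet(n,k): (false, i) = u_i (outer), (true, i) = v_i (inner). *)
Definition pet_vertex (n : nat) := (bool * 'I_n)%type.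

Definition petE (n k : nat) : rel (pet_vertex n) :=
  fun x y =>
    match x, y with
    | (false, i), (false, j) =>
        ((val i).+1 %% n == val j) || ((val j).+1 %% n == val i)
    | (true, i), (true, j) =>
        ((val i + k) %% n == val j) || ((val j + k) %% n == val i)
    | (false, i), (true, j) => val i == val j
    | (true, i), (false, j) => val i == val j
    end.

Definition is_graph_cycle (T : eqType) (e : rel T) (c : seq T) : Prop :=
  2 < size c /\ ucycle e c.

Definition is_least_nat (P : nat -> Prop) (L : nat) : Prop :=
  P L /\ forall x, P x -> L <= x.
Definition is_least_int (P : int -> Prop) (L : int) : Prop :=
  P L /\ forall x, P x -> (L <= x)%R.

Definition odd_cycle_length (n k : nat) (L : nat) : Prop :=
  exists c : seq (pet_vertex n), @is_graph_cycle _ (@petE n k) c /\ size c = L /\ odd L.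

Definition ceil_div (a b : nat) : nat := a %/ b + ~~ (b %| a).

Definition Ind (n k t : nat) : bool :=
  let d := gcdn n k in
  if odd k && odd n then
    odd t && (t <= minn (2 * k %/ d) ((k - 1) ^ 2 %/ n + 1))
  else if odd (n %/ d) && ~~ odd k then
    (0 < t) && (t <= minn (2 * k %/ d) ((k - 1) ^ 2 %/ n))
  else if ~~ odd (n %/ d) && ~~ odd k then
    (0 < t) && (t <= minn (k %/ d) ((k - 1) ^ 2 %/ n))
  else false.

Definition in_G (n k : nat) (x : int) : Prop :=
  exists t : nat, Ind n k t /\
    (x = (Posz (t * n) + (1 - Posz k) * Posz ((t * n) %/ k) + 2)%R \/
     x = ((1 + Posz k) * Posz (ceil_div (t * n) k) - Posz (t * n) + 2)%R).

Definition candidate (n k : nat) (x : int) : Prop :=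
  (x = Posz (n %/ gcdn n k) \/ x = Posz (k + 3) \/ in_G n k x) /\ ~~ (2 %| x)%Z.

From mathcomp Require Import all_boot all_order all_algebra zify.
From Stdlib Require Import Classical Wf_nat.
Set Implicit Arguments. Unset Strict Implicit. Unset Printing Implicit Defensive.
Import Order.TTheory GRing.Theory Num.Theory.

(* A walk in Pet(n,k) with a outer steps of net displacement A, b inner steps of
   net displacement B and s spokes has length a + b + s >= |A| + |B| + s; if it
   is closed, s is even and A + kB = mn for some m.  Conversely every solution of
   A + kB = mn gives a closed walk of length |A| + |B| + 2 (outer arc, spoke,
   inner arc, spoke), and v_0, v_k, v_2k, ... closes after n/d steps.  As an odd
   closed walk contains an odd cycle that is no longer, the odd girth is the least
   odd length among these walks.

   The lengths |A| + |B| + 2 with A + B odd are minimised by a descent: for odd k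
   the move (A, B) -> (A -+ k, B +- 1) and for even n/d the move B -> B - n/d
   keep the relation and the parity without lengthening the walk, whereas for
   even k with |A| >= k, or odd n/d with |B| >= n/d, the walks of length k + 3
   or n/d are already shorter.  What remains is |A| < k, 0 < B < n/d, m = t > 0,
   where B is the floor (A >= 0) or the ceiling (A < 0) of tn/k: an element of G
   when t lies in Ind(n,k).  Otherwise (k-1)^2 < (t-1)n, and the walk is at least
   as long as the element of G for t = 1 (k odd) or as k + 3 (k even). *)

Lemma exists_least_nat (P : nat -> Prop) : (exists m, P m) -> exists g, is_least_nat P g.
Proof.
move=> exP; have [g [[Pg leg] _]] :=
  dec_inh_nat_subset_has_unique_least_element P (fun m => classic (P m)) exP.
by exists g; split=> // x /leg /ssrnat.leP.
Qed.

Lemma not_uniq_split (T : eqType) (s : seq T) :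
  ~~ uniq s -> exists s1 x s2 s3, s = s1 ++ x :: s2 ++ x :: s3.
Proof.
elim: s => [//|y s IHs] /=; rewrite negb_and negbK => /orP [|/IHs].
  by case/splitPr=> s2 s3; exists [::], y, s2, s3.
by case=> s1 [x [s2 [s3 ->]]]; exists (y :: s1), x, s2, s3.
Qed.

(* Split the walk at a repeated vertex into two closed walks; one of them is odd. *)
Lemma odd_cycle_of_odd_closed_walk (T : eqType) (e : rel T) (c : seq T) :
  irreflexive e -> cycle e c -> odd (size c) ->
  exists2 c', is_graph_cycle e c' & odd (size c') && (size c' <= size c).
Proof.
move=> irr_e; have [N] := ubnP (size c); elim: N c => // N IHN c ltcN cyc_c odd_c.
have [uniq_c | /not_uniq_split [s1 [x [s2 [s3 def_c]]]]] := boolP (uniq c).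
  exists c; last by rewrite odd_c leqnn.
  split; last by rewrite /ucycle cyc_c uniq_c.
  by case: c {ltcN uniq_c} cyc_c odd_c => [|x [|y [|z p]]] //=; rewrite irr_e.
have : cycle e (x :: s2 ++ x :: s3 ++ s1).
  by move: cyc_c; rewrite -(rot_cycle (size s1)) def_c rot_size_cat /= -catA.
rewrite /= rcons_cat /= cat_path /= rcons_path => /and4P [e1 e2 e3 e4].
have cyc1 : cycle e (x :: s2) by rewrite /= rcons_path e1 e2.
have cyc2 : cycle e (x :: s3 ++ s1) by rewrite /= rcons_path e3 e4.
have size_c : size c = (size s2 + size (s3 ++ s1)).+2.
  by rewrite def_c !size_cat /= !size_cat /=; lia.
have [odd1 | even1] := boolP (odd (size (x :: s2))).
  have [c' cyc' /andP [odd' le']] := IHN (x :: s2) ltac:(rewrite /=; lia) cyc1 odd1.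
  by exists c'; rewrite // odd' (leq_trans le') // size_c /=; lia.
have odd2 : odd (size (x :: s3 ++ s1)) by move: odd_c even1; rewrite size_c /=; lia.
have [c' cyc' /andP [odd' le']] := IHN (x :: s3 ++ s1) ltac:(rewrite /=; lia) cyc2 odd2.
by exists c'; rewrite // odd' (leq_trans le') // size_c /=; lia.
Qed.

Lemma mkseq_cycle (T : Type) (e : rel T) (g : nat -> T) L :
  (forall i, i < L -> e (g i) (g i.+1)) -> e (g L) (g 0) -> cycle e (mkseq g L.+1).
Proof.
move=> e_step e_last; rewrite (cycle_path (g 0)) -nth_last size_mkseq nth_mkseq //.
apply/(pathP (g 0)) => -[|i]; rewrite size_mkseq => lt_iL; first by rewrite nth_mkseq.
by rewrite [nth _ (_ :: _) _]/= !nth_mkseq ?e_step //; lia.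
Qed.

Lemma dvdn_mul_divn_gcd n k : n %| k * (n %/ gcdn n k).
Proof. by rewrite -muln_divCA_gcd dvdn_mulr. Qed.

Lemma divn_gcd_dvdn n k b : 0 < n -> n %| k * b -> n %/ gcdn n k %| b.
Proof.
move=> n_gt0 dvd_n_kb; have d_gt0 : 0 < gcdn n k by rewrite gcdn_gt0 n_gt0.
have cop : coprime (n %/ gcdn n k) (k %/ gcdn n k).
  by rewrite /coprime -(eqn_pmul2r d_gt0) muln_gcdl !divnK ?dvdn_gcdl ?dvdn_gcdr ?mul1n.
rewrite -(Gauss_dvdr _ cop) -(dvdn_pmul2r d_gt0) mulnAC !divnK ?dvdn_gcdl ?dvdn_gcdr //.
Qed.

Lemma divn_add_modn_le k n t B : 0 < k -> (k - 1) ^ 2 < t.-1 * n -> t * n < k * B.+1 ->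
  n %/ k + n %% k <= B.
Proof.
move=> k_gt0 big_t lt_tn; rewrite leqNgt; apply/negP => lt_B.
have le_kB : k * B.+1 <= k * (n %/ k + n %% k) by rewrite leq_mul2l lt_B orbT.
have le_r : (k - 1) * (n %% k) <= (k - 1) * (k - 1).
  by rewrite leq_mul2l -ltnS subn1 prednK // ltn_pmod // orbT.
have := divn_eq n k; case: t big_t lt_tn => // t; nia.
Qed.

Lemma relation_weight_ge k n t B (A : int) : (k - 1) ^ 2 < t * n -> A != 0%R ->
  (A + Posz k * Posz B = Posz t * Posz n)%R -> k <= `|A| + B.
Proof.
move=> big_t A_neq0 rel; have [le_Bk | ] := leqP B (k - 2); last by lia.
have : (k - 1) * B <= (k - 1) * (k - 2) by rewrite leq_mul2l le_Bk orbT.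
nia.
Qed.

Lemma odd_relation k n t b (A : int) : odd k -> odd n ->
  (A + Posz k * Posz b = Posz t * Posz n)%R -> odd t = odd (`|A| + b).
Proof. move=> odd_k odd_n rel; have := oddM k b; have := oddM t n; rewrite odd_k odd_n; lia. Qed.

Lemma relation_lt k n t b (A : int) : `|A| < k ->
  (A + Posz k * Posz b = Posz t * Posz n)%R -> t * n < k * b.+1.
Proof. lia. Qed.

Lemma odd_divn_add_modn k n : odd k -> odd (n %/ k + n %% k) = odd n.
Proof. by move=> odd_k; rewrite {3}(divn_eq n k) !oddD oddM odd_k andbT. Qed.

Lemma ceil_div_ge a k : 0 < k -> a <= k * ceil_div a k.
Proof.
move=> k_gt0; rewrite /ceil_div {1}(divn_eq a k) mulnDr mulnC.
case: (boolP (k %| a)) => [/eqP-> | _]; first by rewrite addn0 leq_addr.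
by rewrite muln1 leq_add2l ltnW ?ltn_pmod.
Qed.

Lemma notdvdz2_Posz (v : nat) : ~~ (2 %| Posz v)%Z = odd v.
Proof. by rewrite dvdzE /= dvdn2 negbK. Qed.

Lemma candidate_gcd n k : odd (n %/ gcdn n k) -> candidate n k (Posz (n %/ gcdn n k)).
Proof. by split; [left | rewrite notdvdz2_Posz]. Qed.

Lemma candidate_k3 n k : ~~ odd k -> candidate n k (Posz (k + 3)).
Proof. by split; [right; left | rewrite notdvdz2_Posz oddD /= addbT]. Qed.

(* For A >= 0, B is the floor of tn/k; for A < 0, it is the ceiling. *)
Lemma candidate_floor_ceil n k t b (A : int) : 0 < k -> Ind n k t -> `|A| < k ->
  (A + Posz k * Posz b = Posz t * Posz n)%R -> odd (`|A| + b) ->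
  candidate n k (Posz (`|A| + b + 2)).
Proof.
move=> k_gt0 Ind_t ltAk rel odd_Ab; split; last by rewrite notdvdz2_Posz addn2 /= negbK.
right; right; exists t; split=> //; clear odd_Ab; case: A ltAk rel => a ltak rel.
  have def_tn : t * n = b * k + a by lia.
  by left; rewrite def_tn divnMDl // divn_small // addn0; lia.
rewrite NegzE abszN /= in rel ltak *.
have [b' def_b] : exists b', b = b'.+1 by case: b rel => [|b'] rel; [lia | exists b'].
subst b; have def_tn : t * n = b' * k + (k - a.+1) by lia.
have ceil_b : ceil_div (t * n) k = b'.+1.
  rewrite /ceil_div def_tn divnMDl // divn_small; last by lia.
  by rewrite dvdn_addr ?dvdn_mull // gtnNdvd /=; lia.
by right; rewrite ceil_b; lia.
Qed.

Lemma odd_n_of_odd_k n k : ~~ (~~ odd n && odd k) -> odd k -> odd n.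
Proof. by case: (odd k); rewrite ?andbT ?negbK. Qed.

Lemma candidate_exists n k : ~~ (~~ odd n && odd k) -> exists x, candidate n k x.
Proof.
move=> nonbipartite; have [odd_k | even_k] := boolP (odd k); last first.
  by exists (Posz (k + 3)); apply: candidate_k3.
have odd_n := odd_n_of_odd_k nonbipartite odd_k.
exists (Posz (n %/ gcdn n k)); apply/candidate_gcd/(dvdn_odd _ odd_n).
by apply/dvdnP; exists (gcdn n k); rewrite mulnC divnK ?dvdn_gcdl.
Qed.

Section PetersenWalks.

Variables n k : nat.
Hypothesis n_gt0 : 0 < n.
Local Notation adj := (@petE n k).

Definition outer (i : nat) : pet_vertex n := (false, Ordinal (ltn_pmod i n_gt0)).
Definition inner (i : nat) : pet_vertex n := (true, Ordinal (ltn_pmod i n_gt0)).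

Lemma petE_sym : symmetric adj.
Proof. by case=> [[] i] [[] j] /=; first [rewrite orbC | rewrite eq_sym]. Qed.

Lemma petE_irr : 1 < n -> 0 < k < n -> irreflexive adj.
Proof.
move=> n_gt1 /andP [k_gt0 ltkn] [[] [i lt_in]]; rewrite /petE /= orbb; apply/negbTE.
  have [lt_ikn | le_nik] := ltnP (i + k) n; first by rewrite modn_small; lia.
  by rewrite -{1}(subnK le_nik) modnDr modn_small; lia.
have [lt_i1n | le_ni1] := ltnP i.+1 n; first by rewrite modn_small; lia.
have -> : i.+1 = n by lia.
by rewrite modnn; lia.
Qed.

Lemma inner_mod i j : i = j %[mod n] -> inner i = inner j.
Proof. by rewrite /inner => eq_ij; congr (_, _); apply: val_inj. Qed.

Lemma petE_outer i : adj (outer i) (outer i.+1).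
Proof. by rewrite /petE /= -addn1 modnDml addn1 eqxx. Qed.

Lemma petE_inner i : adj (inner i) (inner (i + k)).
Proof. by rewrite /petE /= modnDml eqxx. Qed.

Lemma petE_spoke i j : i = j %[mod n] -> adj (outer i) (inner j).
Proof. by rewrite /petE /= => ->. Qed.

Lemma inner_closed_walk b : 0 < b -> n %| k * b -> exists2 c, cycle adj c & size c = b.
Proof.
case: b => // b _ dvd_n_kb; exists (mkseq (fun j => inner (k * j)) b.+1); last first.
  by rewrite size_mkseq.
apply: mkseq_cycle => [i _|]; first by rewrite mulnS addnC petE_inner.
rewrite muln0 (@inner_mod 0 (k * b + k)) ?petE_inner //.
by rewrite -mulnSr mod0n; apply/esym/eqP.
Qed.

Lemma closed_walk_of_dvdn a b : n %| a + k * b ->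
  exists2 c, cycle adj c & size c = a + b + 2.
Proof.
pose g j := if j <= a then outer j else inner (a + k * (j - a.+1)).
move=> dvd_n; exists (mkseq g (a + b).+2); last by rewrite size_mkseq addn2.
apply: mkseq_cycle => [i _|]; rewrite /g.
  case: (ltngtP i a) => [_ | lt_ai | ->]; first exact: petE_outer.
    by rewrite (subSn lt_ai) mulnS addnA addnAC petE_inner.
  by rewrite subnn muln0 addn0 petE_spoke.
rewrite leq0n ifN; last by rewrite -ltnNge ltnS leq_addr.
by rewrite subSS addKn petE_sym petE_spoke // mod0n; apply/esym/eqP.
Qed.

Lemma closed_walk_of_congr a b : a = k * b %[mod n] ->
  exists2 c, cycle adj c & size c = a + b + 2.
Proof.
pose g j := if j <= a then outer j else inner (k * (a + b.+1 - j)).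
move=> eq_a; exists (mkseq g (a + b).+2); last by rewrite size_mkseq addn2.
apply: mkseq_cycle => [i lt_i|]; rewrite /g.
  case: (ltngtP i a) => [_ | lt_ai | ->]; first exact: petE_outer.
    have -> : a + b.+1 - i = (a + b.+1 - i.+1).+1 by lia.
    by rewrite mulnS addnC petE_sym petE_inner.
  by rewrite addnS subSS addKn petE_spoke.
rewrite leq0n ifN; last by rewrite -ltnNge ltnS leq_addr.
by rewrite addnS subnn muln0 petE_sym petE_spoke.
Qed.

Lemma closed_walk_of_relation (A B m : int) : (A + Posz k * B = m * Posz n)%R ->
  exists2 c, cycle adj c & size c = `|A| + `|B| + 2.
Proof.
wlog B_ge0 : A B m / (0 <= B)%R.
  move=> hwlog rel; have [B_ge0 | B_lt0] := lerP 0 B; first exact: hwlog B_ge0 rel.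
  by rewrite -(abszN A) -(abszN B); apply: (hwlog _ _ (- m)%R); lia.
case: B B_ge0 => [b|//] _; case: A => [a|a] rel.
  by apply: closed_walk_of_dvdn; apply/dvdnP; exists `|m|; lia.
apply: closed_walk_of_congr => /=; rewrite NegzE in rel.
case: m rel => [t|t] rel; rewrite ?NegzE in rel.
  have -> : k * b = t * n + a.+1 by lia.
  by rewrite modnMDl.
have -> : a.+1 = t.+1 * n + k * b by lia.
by rewrite modnMDl.
Qed.

Lemma petE_step x y : adj x y ->
  [\/ [/\ x.1 = false, y.1 = false & exists s m : int,
          `|s| = 1 /\ Posz y.2 = (Posz x.2 + s + m * Posz n)%R],
      [/\ x.1 = true, y.1 = true & exists s m : int,
          `|s| = 1 /\ Posz y.2 = (Posz x.2 + Posz k * s + m * Posz n)%R]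
    | y.1 = ~~ x.1 /\ nat_of_ord y.2 = x.2].
Proof.
case: x y => [[] [i lt_in]] [[] [j lt_jn]] /=.
- case/orP=> /eqP def_j; apply: Or32; split=> //.
    exists 1%R, (- Posz ((i + k) %/ n))%R; have := divn_eq (i + k) n; rewrite def_j; lia.
  exists (-1)%R, (Posz ((j + k) %/ n)); have := divn_eq (j + k) n; rewrite def_j; lia.
- by move/eqP=> ->; apply: Or33.
- by move/eqP=> ->; apply: Or33.
case/orP=> /eqP def_j; apply: Or31; split=> //.
  exists 1%R, (- Posz (i.+1 %/ n))%R; have := divn_eq i.+1 n; rewrite def_j; lia.
exists (-1)%R, (Posz (j.+1 %/ n)); have := divn_eq j.+1 n; rewrite def_j; lia.
Qed.

(* a, b, s count outer steps, inner steps and spokes; A and B are the net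
   outer and inner displacements. *)
Lemma walk_profile x p : path adj x p ->
  exists (a b s : nat) (A B m : int),
  [/\ size p = a + b + s, `|A| <= a /\ ~~ odd (a + `|A|), `|B| <= b /\ ~~ odd (b + `|B|),
      Posz (last x p).2 = (Posz x.2 + A + Posz k * B + m * Posz n)%R
    & (last x p).1 = x.1 (+) odd s /\ (s = 0 -> if x.1 then a = 0 else b = 0)].
Proof.
elim: p x => [|y p IHp] x /=.
  by exists 0, 0, 0, 0%R, 0%R, 0%R; rewrite addbF; split=> //; [lia | case: x.1].
case/andP=> /petE_step step /IHp [a [b [s [A [B [m [size_p hA hB disp [side pure]]]]]]]].
case: step => [[x_out y_out [s0 [m0 [s0_unit y_disp]]]] | [x_in y_in [s0 [m0 [s0_unit y_disp]]]]
              | [y_side y_pos]].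
- exists a.+1, b, s, (A + s0)%R, B, (m + m0)%R; rewrite x_out; split; try lia.
  by rewrite side y_out; split=> // /pure; rewrite y_out.
- exists a, b.+1, s, A, (B + s0)%R, (m + m0)%R; rewrite x_in; split; try lia.
  by rewrite side y_in; split=> // /pure; rewrite y_in.
by exists a, b, s.+1, A, B, m; split; lia.
Qed.

End PetersenWalks.

Lemma closed_walk_of_candidate n k x : 0 < n -> 0 < k -> candidate n k x ->
  exists2 c, cycle (@petE n k) c & Posz (size c) = x.
Proof.
move=> n_gt0 k_gt0 [def_x _]; case: def_x => [-> | [-> | [t [_ [-> | ->]]]]].
- have e_gt0 : 0 < n %/ gcdn n k by rewrite divn_gt0 ?gcdn_gt0 ?n_gt0 // dvdn_leq ?dvdn_gcdl.
  have [c walk <-] := inner_closed_walk n_gt0 e_gt0 (dvdn_mul_divn_gcd n k).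
  by exists c.
- have [c walk size_c] := @closed_walk_of_relation n k n_gt0 (- Posz k) 1 0 ltac:(lia).
  by exists c; rewrite // size_c abszN; lia.
- have := divn_eq (t * n) k; move: (t * n %/ k) (t * n %% k) => q r def_tn.
  have [c walk size_c] := @closed_walk_of_relation n k n_gt0 (Posz r) (Posz q) (Posz t) ltac:(lia).
  by exists c; rewrite // size_c; lia.
have := ceil_div_ge (t * n) k_gt0; move: (ceil_div (t * n) k) => q le_tn.
have [c walk size_c] := @closed_walk_of_relation n k n_gt0
  (Posz (t * n) - Posz k * Posz q) (Posz q) (Posz t) ltac:(lia).
by exists c; rewrite // size_c; lia.
Qed.

Section Descent.

Variables n k : nat.
Hypotheses (k_gt1 : 2 < 2 * k) (le_2k_n : 2 * k <= n) (nonbipartite : ~~ (~~ odd n && odd k)).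

Let n_gt0 : 0 < n. Proof. lia. Qed.
Let k_gt0 : 0 < k. Proof. lia. Qed.
Let gcd_gt0 : 0 < gcdn n k. Proof. by rewrite gcdn_gt0 n_gt0. Qed.

Let e := n %/ gcdn n k.
Let f := k %/ gcdn n k.
Let Q := (k - 1) ^ 2 %/ n.

Lemma mul_k_e : k * e = f * n.
Proof. by rewrite -muln_divCA_gcd mulnC. Qed.

Lemma e_gt0 : 0 < e.
Proof. by rewrite divn_gt0 // dvdn_leq ?dvdn_gcdl. Qed.

Lemma f_gt0 : 0 < f.
Proof. by rewrite divn_gt0 // dvdn_leq ?dvdn_gcdr. Qed.

Lemma candidate_e : odd e -> candidate n k (Posz e).
Proof. exact: candidate_gcd. Qed.

Lemma square_lt_mul t : Q < t -> (k - 1) ^ 2 < t * n.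
Proof. by move=> lt_Qt; apply: (leq_trans (ltn_ceil _ n_gt0)); rewrite leq_mul2r lt_Qt orbT. Qed.

Lemma Ind_of_le t : 0 < t <= f -> t <= Q + odd k -> (odd k -> odd t) -> Ind n k t.
Proof.
move=> /andP [t_gt0 le_tf] le_tQ odd_t; rewrite /Ind -muln_divA ?dvdn_gcdr // -/e -/f -/Q.
have [odd_k | even_k] := boolP (odd k).
  by rewrite (odd_n_of_odd_k nonbipartite) // odd_t //= leq_min; rewrite odd_k in le_tQ; lia.
rewrite (negbTE even_k) in le_tQ *; rewrite /= !andbT.
by case: (odd e) => /=; rewrite t_gt0 leq_min; lia.
Qed.

Lemma candidate_le_reduced (A : int) (b t : nat) :
  `|A| < k -> 0 < b < e -> (A + Posz k * Posz b = Posz t * Posz n)%R -> odd (`|A| + b) ->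
  exists2 x, candidate n k x & (x <= Posz (`|A| + b + 2))%R.
Proof.
move=> ltAk /andP [b_gt0 lt_be] rel odd_Ab.
have A_neq0 : A != 0%R.
  apply: contraTneq lt_be => A0; rewrite -leqNgt dvdn_leq // divn_gcd_dvdn //.
  by apply/dvdnP; exists t; lia.
have t_gt0 : 0 < t.
  case: t rel => [|t] // rel; have : k <= k * b by rewrite leq_pmulr.
  lia.
have le_tf : t <= f.
  have : k * b.+1 <= k * e by rewrite leq_mul2l lt_be orbT.
  by move=> ?; rewrite -(leq_pmul2r n_gt0) -mul_k_e; lia.
have [odd_k | even_k] := boolP (odd k).
  have odd_n := odd_n_of_odd_k nonbipartite odd_k.
  have [le_tQ | lt_Qt] := leqP t (Q + 1).
    have Ind_t : Ind n k t.
      apply: Ind_of_le => [| | _]; first by rewrite t_gt0 le_tf.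
        by rewrite odd_k.
      by rewrite (odd_relation odd_k odd_n rel).
    by exists (Posz (`|A| + b + 2)); first exact: candidate_floor_ceil k_gt0 Ind_t ltAk rel odd_Ab.
  exists (Posz (n %% k + n %/ k + 2)).
    apply: (@candidate_floor_ceil _ _ 1 (n %/ k) (Posz (n %% k))) => //=.
    - by apply: Ind_of_le => [| | //]; rewrite ?f_gt0 ?odd_k ?addn1.
    - by rewrite ltn_pmod.
    - by rewrite mul1r {3}(divn_eq n k) PoszD PoszM addrC mulrC.
    by rewrite addnC odd_divn_add_modn.
  rewrite lez_nat leq_add2r addnC (leq_trans _ (leq_addl `|A| b)) //.
  have lt_Q_pt : Q < t.-1 by rewrite -ltnS prednK // -addn1.
  exact: divn_add_modn_le k_gt0 (square_lt_mul lt_Q_pt) (relation_lt ltAk rel).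
have [le_tQ | lt_Qt] := leqP t Q.
  have Ind_t : Ind n k t.
    by apply: Ind_of_le; rewrite ?t_gt0 ?le_tf // (negbTE even_k) ?addn0.
  by exists (Posz (`|A| + b + 2)); first exact: candidate_floor_ceil k_gt0 Ind_t ltAk rel odd_Ab.
exists (Posz (k + 3)); first exact: candidate_k3.
have := relation_weight_ge (square_lt_mul lt_Qt) A_neq0 rel; lia.
Qed.

Lemma candidate_le_relation (A B m : int) :
  (A + Posz k * B = m * Posz n)%R -> odd `|(A + B)%R| ->
  exists2 x, candidate n k x & (x <= Posz (`|A| + `|B| + 2))%R.
Proof.
(* Hiding the bodies of e, f and Q keeps lia from expanding their divisions. *)
clearbody e f Q; have [N] := ubnP (`|A| + `|B|); elim: N A B m => // N IHN A B m ltN.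
wlog B_ge0 : A B m ltN / (0 <= B)%R.
  move=> hwlog rel odd_AB; have [B_ge0 | B_lt0] := lerP 0 B; first exact: hwlog B_ge0 rel odd_AB.
  rewrite -(abszN A) -(abszN B); apply: (hwlog _ _ (- m)%R).
  - by rewrite !abszN.
  - by rewrite oppr_ge0 ltW.
  - by rewrite mulrN -opprD rel mulNr.
  by rewrite -opprD abszN.
move=> rel odd_AB; have [le_kA | ltAk] := leqP k `|A|.
  have [odd_k | even_k] := boolP (odd k); last first.
    by exists (Posz (k + 3)); [exact: candidate_k3 | lia].
  have [A_ge0 | A_lt0] := lerP 0 A.
    have [x cand_x le_x] := IHN (A - Posz k)%R (B + 1)%R m ltac:(lia) ltac:(lia) ltac:(lia).
    by exists x => //; lia.
  have [x cand_x le_x] := IHN (A + Posz k)%R (B - 1)%R m ltac:(lia) ltac:(lia) ltac:(lia).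
  by exists x => //; lia.
have [le_eB | ltBe] := leqP e `|B|.
  have [odd_e | even_e] := boolP (odd e).
    by exists (Posz e); [exact: candidate_e | lia].
  move: e_gt0 mul_k_e => e_gt0 mul_k_e.
  have [x cand_x le_x] := IHN A (B - Posz e)%R (m - Posz f)%R ltac:(lia) ltac:(lia) ltac:(lia).
  by exists x => //; lia.
case: B B_ge0 ltBe rel odd_AB {ltN} => [b|//] _ lt_be rel odd_Ab.
have b_gt0 : 0 < b.
  case: b rel odd_Ab {lt_be} => // rel odd_A; rewrite mulr0 addr0 in rel odd_A.
  have : `|A| = `|m| * n by rewrite rel abszM.
  by case: `|m| => [|m'] absA; [rewrite absA in odd_A | lia].
have [t def_m] : exists t, m = Posz t.
  case: m rel => [t|t] rel; first by exists t.
  have : k <= k * b by rewrite leq_pmulr.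
  have : n <= t.+1 * n by rewrite leq_pmull.
  rewrite NegzE in rel; lia.
rewrite def_m in rel; apply: candidate_le_reduced ltAk _ rel _; first by rewrite b_gt0.
by move: odd_Ab; clear; lia.
Qed.

End Descent.

Section OddGirth.

Variables n k : nat.
Hypotheses (k_gt1 : 2 < 2 * k) (le_2k_n : 2 * k <= n) (nonbipartite : ~~ (~~ odd n && odd k)).

Let n_gt0 : 0 < n. Proof. lia. Qed.
Let k_gt0 : 0 < k. Proof. lia. Qed.

Lemma candidate_le_multiple X : odd X -> n %/ gcdn n k %| X ->
  exists2 x, candidate n k x & (x <= Posz X)%R.
Proof.
move=> odd_X dvd_eX; exists (Posz (n %/ gcdn n k)); first exact/candidate_gcd/(dvdn_odd dvd_eX).
by rewrite lez_nat dvdn_leq //; case: X odd_X {dvd_eX}.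
Qed.

Lemma candidate_le_odd_closed_walk c : cycle (@petE n k) c -> odd (size c) ->
  exists2 x, candidate n k x & (x <= Posz (size c))%R.
Proof.
case: c => [//| x p] /= walk odd_c.
have [a [b [s [A [B [m [size_p [leA parA] [leB parB] disp [side pure]]]]]]]] :=
  walk_profile n_gt0 walk.
rewrite last_rcons in disp side; rewrite size_rcons in size_p.
have even_s : ~~ odd s by move: side; case: (x.1); case: (odd s).
have rel : (A + Posz k * B = (- m) * Posz n)%R by lia.
have [s0 | s_gt0] := posnP s; last first.
  have [y cand_y le_y] := candidate_le_relation k_gt1 le_2k_n nonbipartite rel ltac:(lia).
  by exists y => //; lia.
have [X odd_X [dvd_nX leX]] : exists2 X, odd X & n %| k * X /\ X <= (size p).+1.
  case: (x.1) (pure s0) => [a0 | b0].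
    have A0 : A = 0%R by lia.
    exists `|B|; first by lia.
    split; last by lia.
    by apply/dvdnP; exists `|m|; move/(congr1 absz): rel; rewrite A0 add0r !abszM abszN.
  have B0 : B = 0%R by lia.
  exists `|A|; first by lia.
  split; last by lia.
  by apply/dvdn_mull/dvdnP; exists `|m|; move/(congr1 absz): rel; rewrite B0 mulr0 addr0 abszM abszN.
have [y cand_y le_y] := candidate_le_multiple odd_X (divn_gcd_dvdn n_gt0 dvd_nX).
by exists y => //; lia.
Qed.

Lemma odd_cycle_le_candidate x : candidate n k x ->
  exists2 L, odd_cycle_length n k L & (Posz L <= x)%R.
Proof.
move=> cand_x; have [c walk size_c] := closed_walk_of_candidate n_gt0 k_gt0 cand_x.
have odd_c : odd (size c) by case: cand_x => _; rewrite -size_c notdvdz2_Posz.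
have irr : irreflexive (@petE n k) by apply: petE_irr; lia.
have [c' cyc' /andP [odd' le']] := odd_cycle_of_odd_closed_walk irr walk odd_c.
by exists (size c'); [exists c' | rewrite -size_c lez_nat].
Qed.

Lemma candidate_le_odd_cycle L : odd_cycle_length n k L ->
  exists2 x, candidate n k x & (x <= Posz L)%R.
Proof. by move=> [c [[_ /andP [walk _]] [<- odd_c]]]; apply: candidate_le_odd_closed_walk. Qed.

End OddGirth.

Theorem theorem1 (n k : nat) :
  2 < 2 * k -> 2 * k <= n -> ~~ (~~ odd n && odd k) ->
  exists g : nat,
    is_least_nat (odd_cycle_length n k) g /\ is_least_int (candidate n k) (Posz g).
Proof.
move=> k_gt1 le_2k_n nonbipartite.
have cycle_le := odd_cycle_le_candidate k_gt1 le_2k_n nonbipartite.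
have cand_le := candidate_le_odd_cycle k_gt1 le_2k_n nonbipartite.
have [x0 /cycle_le [L0 odd_L0 _]] := candidate_exists nonbipartite.
have [g [odd_g g_least]] := exists_least_nat (ex_intro _ L0 odd_L0).
exists g; split=> //; split=> [|x /cycle_le [L odd_L le_Lx]]; last first.
  by have := g_least L odd_L; lia.
have [x cand_x le_xg] := cand_le g odd_g.
have [L odd_L le_Lx] := cycle_le x cand_x.
suff -> : Posz g = x by [].
by have := g_least L odd_L; lia.
Qed.
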